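(* Let $D$ be an Eulerian digraph (finite, without loops, parallel arcs or digons), let $\mathcal{F}(D)$ be a cycle decomposition of $D$ with associated dicycle intersection graph $CI(D)$, and let $\hat v\in V(CI(D))$ correspond to the dicycle $C_{\hat v}\in\mathcal{F}(D)$. Suppose the subgraph $CI(D)[N[\hat v]]$ of $CI(D)$ induced by the closed neighbourhood $N[\hat v]$ (i.e. $\hat v$ together with all dicycles of $\mathcal{F}(D)$ sharing a vertex with $C_{\hat v}$) is a simple block graph (it has no parallel edges and every block of it is a complete graph). Then $V(C_{\hat v})\subseteq SV(D)$; in particular $SV(D)\neq\emptyset$.
   Context: All digraphs are finite, with no loops, no parallel arcs and no digons (a digon is a pair of arcs $u\to w$, $w\to u$), so every dicycle has length at least $3$. $N^{+}(v)$ is the set of out-neighbours of $v$; $N^{+2}(v)$ is the set of vertices $w\notin N^{+}(v)\cup\{v\}$ such that $u\to w$ is an arc for some $u\in N^{+}(v)$; $SV(D)$ is the set of vertices $v$ with $|N^{+2}(v)|\ge|N^{+}(v)|$. An Eulerian digraph is a (weakly) connected digraph with $d^{+}(x)=d^{-}(x)$ for all vertices $x$. A cycle decomposition $\mathcal{F}(D)$ is a set of dicycles whose arc sets partition $A(D)$. The dicycle intersection graph $CI(D)$ associated with $\mathcal{F}(D)$ is the multigraph with vertex set $\mathcal{F}(D)$ having, for each pair of distinct dicycles $C,C'$ and each vertex of $D$ lying on both, one edge between $C$ and $C'$. A block of a graph is a maximal 2-connected subgraph or a bridge/isolated vertex. *)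

From mathcomp Require Import all_boot.
Unset Printing Implicit Defensive.

(* A digraph on the finite vertex type T with arc relation a (a x y : arc x -> y).
   A relation rules out parallel arcs automatically. *)
Definition simple_digraph (T : finType) (a : rel T) : Prop :=
  (forall x, ~~ a x x) /\ (forall x y, a x y -> ~~ a y x).

Definition outdeg (T : finType) (a : rel T) (x : T) : nat := #|[set y | a x y]|.
Definition indeg (T : finType) (a : rel T) (x : T) : nat := #|[set y | a y x]|.

Definition weakly_connected (T : finType) (a : rel T) : Prop :=
  forall x y : T, connect [rel u v | a u v || a v u] x y.

Definition eulerian (T : finType) (a : rel T) : Prop :=
  weakly_connected T a /\ forall x, outdeg T a x = indeg T a x.

Definition dicycle (T : finType) (a : rel T) (c : seq T) : Prop :=
  [/\ c != [::], uniq c & cycle a c].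

Definition cyc_arc (T : finType) (c : seq T) (x y : T) : bool :=
  (x \in c) && (next c x == y).

Definition cycle_decomposition (T : finType) (a : rel T) (F : seq (seq T)) : Prop :=
  (forall c, c \in F -> dicycle T a c) /\
  (forall i j, i < size F -> j < size F -> i != j ->
     forall x y, ~~ (cyc_arc T (nth [::] F i) x y && cyc_arc T (nth [::] F j) x y)) /\
  (forall x y, a x y -> exists2 c, c \in F & cyc_arc T c x y).

Definition Nout (T : finType) (a : rel T) (v : T) : {set T} := [set w | a v w].
Definition Nout2 (T : finType) (a : rel T) (v : T) : {set T} :=
  [set w | (w \notin Nout T a v) && (w != v) && [exists u in Nout T a v, a u w]].
Definition SV (T : finType) (a : rel T) : {set T} :=
  [set v | #|Nout T a v| <= #|Nout2 T a v|].

(* The dicycle intersection graph CI(D): vertices are indices 'I_(size F);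
   the number of edges between distinct i, j is the number of common vertices. *)
Definition ci_mult (T : finType) (F : seq (seq T)) (i j : 'I_(size F)) : nat :=
  if i == j then 0
  else #|[pred v : T | (v \in nth [::] F i) && (v \in nth [::] F j)]|.

Definition ci_adj (T : finType) (F : seq (seq T)) : rel 'I_(size F) :=
  fun i j => 0 < ci_mult T F i j.

Definition closed_nbhd (T : finType) (F : seq (seq T)) (k : 'I_(size F))
  : {set 'I_(size F)} := [set j | (j == k) || ci_adj T F k j].

(* the subgraph induced by S is connected (vacuous for the empty set) *)
Definition induced_connected (I : finType) (e : rel I) (S : {set I}) : Prop :=
  forall x y, x \in S -> y \in S ->
    connect [rel u v | [&& u \in S, v \in S & e u v]] x y.

(* induced subgraph on B is nonseparable: nonempty, connected, no cut vertex
   (this covers K1, K2 and 2-connected graphs) *)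
Definition nonseparable (I : finType) (e : rel I) (B : {set I}) : Prop :=
  B != set0 /\ induced_connected I e B /\
  (forall v, v \in B -> induced_connected I e (B :\ v)).

(* a block of the subgraph induced by S: a maximal nonseparable subgraph
   (blocks are induced subgraphs, so they are determined by vertex sets) *)
Definition is_block (I : finType) (e : rel I) (S B : {set I}) : Prop :=
  [/\ B \subset S, nonseparable I e B &
      forall B' : {set I}, B \subset B' -> B' \subset S -> nonseparable I e B' -> B' = B].

Definition every_block_complete (I : finType) (e : rel I) (S : {set I}) : Prop :=
  forall B, is_block I e S B ->
    forall x y, x \in B -> y \in B -> x != y -> e x y.

Definition simple_block_graph_nbhd (T : finType) (F : seq (seq T)) (k : 'I_(size F))
  : Prop :=
  (forall i j, i \in closed_nbhd T F k -> j \in closed_nbhd T F k ->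
     ci_mult T F i j <= 1) /\
  every_block_complete _ (ci_adj T F) (closed_nbhd T F k).

(* Let [v] lie on the dicycle [C_k].  For an out-neighbour [u] of [v], follow the
   dicycle of the decomposition that carries the arc [v -> u] one step further,
   to [u -> w].  Then [w <> v] (no digons) and [v -> w] is not an arc: otherwise
   the dicycle carrying [v -> w] would share the two vertices [v] and [w] with
   the first one, and since both meet [C_k] in [v], the absence of parallel edges
   in [CI(D)[N[k]]] forces them to coincide, so that [w = u] would carry a loop.
   Hence [w] is in [N+2(v)], and the same argument shows that [u |-> w] is
   injective, so [|N+(v)| <= |N+2(v)|]. *)
From mathcomp Require Import all_boot.

Set Implicit Arguments.
Unset Strict Implicit.

Lemma mem_cyc_arc_l (T : finType) (c : seq T) x y : cyc_arc T c x y -> x \in c.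
Proof. by case/andP. Qed.

Lemma mem_cyc_arc_r (T : finType) (c : seq T) x y : cyc_arc T c x y -> y \in c.
Proof. by case/andP=> xc /eqP <-; rewrite mem_next. Qed.

Lemma ci_mult_gt1 (T : finType) (F : seq (seq T)) (i j : 'I_(size F)) x y :
  i != j -> x != y -> x \in nth [::] F i -> y \in nth [::] F i ->
  x \in nth [::] F j -> y \in nth [::] F j -> 1 < ci_mult T F i j.
Proof.
move=> ij xy xi yi xj yj; rewrite /ci_mult (negbTE ij).
have <- : #|[set x; y]| = 2 by rewrite cards2 xy.
apply: subset_leq_card; apply/subsetP=> z.
by rewrite !inE => /orP[] /eqP ->; apply/andP.
Qed.

Section SecondOutNeighbourhood.

Variables (T : finType) (a : rel T) (F : seq (seq T)) (k : 'I_(size F)).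

Hypothesis a_irrefl : forall x, ~~ a x x.
Hypothesis a_asym : forall x y, a x y -> ~~ a y x.
Hypothesis F_dicycle : forall c, c \in F -> dicycle T a c.
Hypothesis F_cover : forall x y, a x y -> exists2 c, c \in F & cyc_arc T c x y.
Hypothesis nbhd_no_parallel : forall i j,
  i \in closed_nbhd T F k -> j \in closed_nbhd T F k -> ci_mult T F i j <= 1.

Local Notation C i := (nth [::] F i).

Lemma arc_nth_cyc_arc (i : 'I_(size F)) x y : cyc_arc T (C i) x y -> a x y.
Proof.
case/andP=> xi /eqP <-; have [_ _ cyc] := F_dicycle (mem_nth [::] (ltn_ord i)).
exact: next_cycle.
Qed.

Lemma cover_index x y : a x y -> exists i : 'I_(size F), cyc_arc T (C i) x y.
Proof.
case/F_cover=> c cF xy; have cF' : index c F < size F by rewrite index_mem.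
exists (Ordinal cF').
by rewrite /= nth_index.
Qed.

Lemma closed_nbhd_meet (i : 'I_(size F)) v :
  v \in C k -> v \in C i -> i \in closed_nbhd T F k.
Proof.
move=> vk vi; rewrite inE /ci_adj /ci_mult eq_sym.
by case: eqP => //= _; apply/card_gt0P; exists v; apply/andP.
Qed.

Lemma eq_nbhd_cycles (i j : 'I_(size F)) v w :
  v \in C k -> v != w -> v \in C i -> w \in C i -> v \in C j -> w \in C j ->
  i = j.
Proof.
move=> vk vw vi wi vj wj; apply/eqP/negPn/negP=> ij.
have := nbhd_no_parallel (closed_nbhd_meet vk vi) (closed_nbhd_meet vk vj).
by rewrite leqNgt (ci_mult_gt1 ij vw).
Qed.

Variable v : T.
Hypothesis vk : v \in C k.

Definition step_after (u : T) : T :=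
  if [pick i : 'I_(size F) | cyc_arc T (C i) v u] is Some i
  then next (C i) u else u.

Lemma step_afterP u : a v u ->
  exists i : 'I_(size F), cyc_arc T (C i) v u /\ cyc_arc T (C i) u (step_after u).
Proof.
move=> vu; rewrite /step_after; case: pickP => [i vui | none].
  by exists i; split; rewrite // /cyc_arc eqxx (mem_cyc_arc_r vui).
by have [i vui] := cover_index vu; move: (none i); rewrite vui.
Qed.

Lemma step_after_neq u : a v u -> v != step_after u.
Proof.
move=> vu; have [i [_ /arc_nth_cyc_arc uw]] := step_afterP vu.
by apply: contraTneq uw => <-; apply: a_asym.
Qed.

Lemma step_after_Nout2 u : a v u -> step_after u \in Nout2 T a v.
Proof.
move=> vu; have [i [vui uwi]] := step_afterP vu; have vw := step_after_neq vu.
set w := step_after u in uwi vw *; have uw := arc_nth_cyc_arc uwi.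
rewrite !inE eq_sym vw andbT; apply/andP; split; last first.
  by apply/existsP; exists u; rewrite inE vu.
apply/negP=> /cover_index [j vwj].
have ij : i = j.
  by apply: (eq_nbhd_cycles vk vw);
    [exact: mem_cyc_arc_l vui | exact: mem_cyc_arc_r uwi
    | exact: mem_cyc_arc_l vwj | exact: mem_cyc_arc_r vwj].
have wu : w = u.
  by move: vui vwj; rewrite ij => /andP[_ /eqP <-] /andP[_ /eqP <-].
by move: uw; rewrite wu (negbTE (a_irrefl u)).
Qed.

Lemma step_after_inj : {in Nout T a v &, injective step_after}.
Proof.
move=> u u'; rewrite !inE => vu vu' eq_w.
have [i [vui uwi]] := step_afterP vu; have [j [vuj]] := step_afterP vu'.
rewrite -eq_w => uwj.
have ij : i = j.
  by apply: (eq_nbhd_cycles vk (step_after_neq vu));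
    [exact: mem_cyc_arc_l vui | exact: mem_cyc_arc_r uwi
    | exact: mem_cyc_arc_l vuj | exact: mem_cyc_arc_r uwj].
by move: vui vuj; rewrite ij => /andP[_ /eqP <-] /andP[_ /eqP <-].
Qed.

Lemma mem_SV_nbhd_cycle : v \in SV T a.
Proof.
rewrite inE -(card_in_imset step_after_inj); apply: subset_leq_card.
by apply/subsetP=> w /imsetP[u]; rewrite inE => vu ->; apply: step_after_Nout2.
Qed.

End SecondOutNeighbourhood.

Theorem mainTheorem6 (T : finType) (a : rel T) (F : seq (seq T))
  (k : 'I_(size F)) :
  simple_digraph T a -> eulerian T a -> cycle_decomposition T a F ->
  simple_block_graph_nbhd T F k ->
  {subset nth [::] F k <= SV T a} /\ SV T a != set0.
Proof.
move=> [a_irrefl a_asym] _ [F_dicycle [_ F_cover]] [nbhd_no_parallel _].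
have sub_SV : {subset nth [::] F k <= SV T a}.
  by move=> v; apply: mem_SV_nbhd_cycle.
split=> //; have [Ck_nonempty _ _] := F_dicycle _ (mem_nth [::] (ltn_ord k)).
case: (nth [::] F k) sub_SV Ck_nonempty => [|x s] // sub_SV _.
by apply/set0Pn; exists x; apply: sub_SV; rewrite mem_head.
Qed.
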